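(* Let $a_1,a_2,a_3\in\mathbb{R}^N$ be distinct points and let $\epsilon>0$ satisfy $\|a_2-a_3\|>12\epsilon$, $\|a_1-a_2\|>2\epsilon$, $\|a_1-a_3\|>2\epsilon$, and $\mathrm{dist}(a_1,L)>2\epsilon$, where $L$ is the line through $a_2$ and $a_3$. Let $K_1,K_2,K_3$ be obstacles forming an open billiard configuration, with $a_i\in K_i$ and $\mathrm{diam}(K_i)\le\epsilon$ for $i=1,2,3$. For $k\ge1$ let $B_k$ be the word consisting of $(1,2)$ repeated $2^{2k-1}$ times (length $2^{2k}$) followed by $(1,3)$ repeated $2^{2k}$ times (length $2^{2k+1}$), and let $\xi\in\Sigma$ be any sequence whose coordinates $\xi_0,\xi_1,\xi_2,\dots$ are given by the concatenation $B_1B_2B_3\cdots$. Then the rotation vector $\rho_\phi(\xi)=\lim_{n\to\infty}\frac1n\sum_{j=0}^{n-1}\phi(\sigma^j\xi)$ does not exist.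
   Context: An open billiard configuration: the $K_i$ are pairwise disjoint compact strictly convex subsets of $\mathbb{R}^N$ with $C^2$-smooth boundaries satisfying the no-eclipse condition (for distinct $i,j,k$, the convex hull of $K_i\cup K_j$ does not meet $K_k$). $\Sigma$ is the set of bi-infinite sequences $(\xi_i)_{i\in\mathbb{Z}}$ over $\{1,2,3\}$ with $\xi_i\ne\xi_{i+1}$, $\sigma$ the left shift. For $\xi\in\Sigma$ there is a unique billiard trajectory in $\mathbb{R}^N\setminus(K_1\cup K_2\cup K_3)$ with infinitely many reflections forwards and backwards whose $i$-th reflection lies on $\partial K_{\xi_i}$ for every $i\in\mathbb{Z}$; $\phi(\xi)\in\partial K_{\xi_0}$ is its $0$-th reflection point. *)

From HB Require Import structures.
From mathcomp Require Import all_boot all_order all_algebra.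
From mathcomp Require Import all_classical all_reals all_analysis.
Set Implicit Arguments. Unset Strict Implicit. Unset Printing Implicit Defensive.
Import Order.TTheory GRing.Theory Num.Theory.
Import numFieldNormedType.Exports.
Local Open Scope classical_set_scope.
Local Open Scope ring_scope.

Section Billiard.
Variables (R : realType) (N : nat).
Local Notation V := 'rV[R]_N.

(* Euclidean inner product and Euclidean norm (the library norm on 'rV is the
   sup norm, so we define the Euclidean one explicitly). *)
Definition dotv (u v : V) : R := (u *m v^T) 0 0.
Definition enorm (u : V) : R := Num.sqrt (dotv u u).
Definition unitv (u : V) : V := (enorm u)^-1 *: u.

Definition ediam (A : set V) : R := sup [set enorm (x - y) | x in A & y in A].
Definition edist_set (a : V) (A : set V) : R := inf [set enorm (a - x) | x in A].

Definition line_through (b c : V) : set V := [set b + t *: (c - b) | t in [set: R]].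

Definition bdry (A : set V) : set V := closure A `\` interior A.

Definition convex_set (A : set V) : Prop :=
  forall x y t, A x -> A y -> 0 <= t <= 1 -> A ((1 - t) *: x + t *: y).

Definition strictly_convex (A : set V) : Prop :=
  convex_set A /\
  forall x y t, A x -> A y -> x != y -> 0 < t < 1 ->
    interior A ((1 - t) *: x + t *: y).

Definition conv_hull (A : set V) : set V :=
  [set x | forall C, convex_set C -> A `<=` C -> C x].

Definition basisv (i : 'I_N) : V := delta_mx 0 i.

Definition C2 (f : V -> R) : Prop :=
  continuous f /\
  forall i j : 'I_N,
    (forall x, derivable f x (basisv i)) /\
    continuous (fun x => derive f x (basisv i)) /\
    (forall x, derivable (fun y => derive f y (basisv i)) x (basisv j)) /\
    continuous (fun x => derive (fun y => derive f y (basisv i)) x (basisv j)).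

Definition C2_boundary (A : set V) : Prop :=
  forall p, bdry A p ->
    exists (U : set V) (f : V -> R),
      open U /\ U p /\ C2 f /\
      (A `&` U = [set x | U x /\ f x <= 0]) /\
      exists i : 'I_N, derive f p (basisv i) != 0.

Definition obstacle (A : set V) : Prop :=
  compact A /\ strictly_convex A /\ C2_boundary A.

Definition idx3 (i : nat) : Prop := (1 <= i <= 3)%N.

Definition open_billiard3 (K : nat -> set V) : Prop :=
  (forall i, idx3 i -> obstacle (K i)) /\
  (forall i j, idx3 i -> idx3 j -> i <> j -> K i `&` K j = set0) /\
  (forall i j k, idx3 i -> idx3 j -> idx3 k -> i <> j -> j <> k -> i <> k ->
     conv_hull (K i `|` K j) `&` K k = set0).

Definition in_Sigma (xi : int -> nat) : Prop :=
  forall i : int, idx3 (xi i) /\ xi i <> xi (i + 1).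

Definition shiftn (j : nat) (xi : int -> nat) : int -> nat :=
  fun i => xi (i + j%:Z).

Definition outward_normal (A : set V) (p n : V) : Prop :=
  enorm n = 1 /\ forall y, A y -> dotv n (y - p) <= 0.

Definition billiard_traj (K : nat -> set V) (xi : int -> nat) (p : int -> V)
  : Prop :=
  forall i : int,
    bdry (K (xi i)) (p i) /\
    (forall t : R, 0 < t < 1 -> forall k, idx3 k ->
       ~ K k (p i + t *: (p (i + 1) - p i))) /\
    exists n, outward_normal (K (xi i)) (p i) n /\
      let v := unitv (p i - p (i - 1)) in
      let w := unitv (p (i + 1) - p i) in
      w = v - (2 * dotv v n) *: n.

Definition is_phi (K : nat -> set V) (phi : (int -> nat) -> V) : Prop :=
  forall xi, in_Sigma xi ->
    exists p, billiard_traj K xi p /\ phi xi = p 0.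

Definition birkhoff_avg (phi : (int -> nat) -> V) (xi : int -> nat) (n : nat)
  : V := (n%:R)^-1 *: \sum_(j < n) phi (shiftn j xi).

End Billiard.

Definition Bword (k : nat) : seq nat :=
  flatten (nseq (2 ^ (2 * k - 1)) [:: 1; 2]%N) ++
  flatten (nseq (2 ^ (2 * k)) [:: 1; 3]%N).

Definition Bprefix (m : nat) : seq nat := flatten [seq Bword k | k <- iota 1 m].

(* n-th letter (n >= 0) of the infinite word B_1 B_2 B_3 ...; Bprefix n.+1 has
   length > n *)
Definition Binf (n : nat) : nat := nth 0%N (Bprefix n.+1) n.

From HB Require Import structures.
From mathcomp Require Import all_boot all_order all_algebra.
From mathcomp Require Import all_classical all_reals all_analysis.
From mathcomp Require Import ring lra zify.
Import Order.TTheory GRing.Theory Num.Theory.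
Import numFieldNormedType.Exports.
Local Open Scope classical_set_scope.
Local Open Scope ring_scope.
Set Implicit Arguments. Unset Strict Implicit.

(* Project everything on u = a2 - a3 and let y_j = <phi(sigma^j xi), u>.  As
   the obstacles have diameter at most eps, y_j lies within eps |u| of
   <a_(xi_j), u>.  The block (12)^(2^(2k-1)) starting at position P_k is at
   least as long as the prefix before it, so convergence of the Cesaro means
   of y to L forces the mean (<a1,u> + <a2,u>)/2 of y on that block to be close
   to L; likewise for the mean (<a1,u> + <a3,u>)/2 on the following block
   (13)^(2^(2k)).  Letting k grow gives |u|^2 = <a2 - a3, u> <= 4 eps |u|,
   contradicting |u| > 12 eps. *)

Section Euclidean.
Variables (R : realType) (N : nat).
Implicit Types (u v x y : 'rV[R]_N) (A : set 'rV[R]_N).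

Lemma dotvE u v : dotv u v = \sum_i u 0 i * v 0 i.
Proof. by rewrite /dotv mxE; apply: eq_bigr => i _; rewrite mxE. Qed.

Lemma dotv_ge0 u : 0 <= dotv u u.
Proof. by rewrite dotvE; apply: sumr_ge0 => i _; rewrite -expr2 sqr_ge0. Qed.

Lemma dotvBl x y u : dotv (x - y) u = dotv x u - dotv y u.
Proof. by rewrite !dotvE -sumrB; apply: eq_bigr => i _; rewrite !mxE mulrBl. Qed.

Lemma dotvZl (r : R) x u : dotv (r *: x) u = r * dotv x u.
Proof. by rewrite /dotv -scalemxAl mxE. Qed.

Lemma dotv_suml n (v : 'I_n -> 'rV[R]_N) u :
  dotv (\sum_(j < n) v j) u = \sum_(j < n) dotv (v j) u.
Proof. by rewrite /dotv mulmx_suml summxE. Qed.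

Lemma dotv_sqr_le x r : 0 <= r -> enorm x <= r -> dotv x x <= r ^+ 2.
Proof.
by move=> r0; rewrite -(ler_sqr (sqrtr_ge0 _)) ?nnegrE // sqr_sqrtr ?dotv_ge0.
Qed.

Lemma normr_dotv_le u v a b : 0 < a -> 0 < b ->
  dotv u u <= a ^+ 2 -> dotv v v <= b ^+ 2 -> `|dotv u v| <= a * b.
Proof.
move=> a0 b0 hu hv.
have expand t : \sum_i (b * u 0 i - t * v 0 i) ^+ 2
    = b ^+ 2 * dotv u u - 2 * b * t * dotv u v + t ^+ 2 * dotv v v.
  rewrite !dotvE !mulr_sumr -sumrB -big_split /=.
  by apply: eq_bigr => i _; ring.
have sqr_sum_ge0 t : 0 <= \sum_i (b * u 0 i - t * v 0 i) ^+ 2.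
  by apply: sumr_ge0 => i _; rewrite sqr_ge0.
have := sqr_sum_ge0 a; have := sqr_sum_ge0 (- a); rewrite !expand sqrrN.
have hbu : b ^+ 2 * dotv u u <= b ^+ 2 * a ^+ 2 by rewrite ler_pM2l ?exprn_gt0.
have hav : a ^+ 2 * dotv v v <= a ^+ 2 * b ^+ 2 by rewrite ler_pM2l ?exprn_gt0.
move=> h1 h2; have ab0 : 0 < a * b by rewrite mulr_gt0.
rewrite ler_norml -(ler_pM2l ab0) -[X in _ && X](ler_pM2l ab0).
apply/andP; split; nra.
Qed.

Lemma coord_le_normr x i : `|x 0 i| <= `|x|.
Proof.
rewrite [X in _ <= X]mx_normrE.
exact: (le_bigmax _ (fun ij : 'I_1 * 'I_N => `|x ij.1 ij.2|) (0, i)).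
Qed.

Lemma enorm_le_ediam A x y : compact A -> A x -> A y -> enorm (x - y) <= ediam A.
Proof.
move=> /compact_bounded [M [_ HM]] Ax Ay.
have {}HM z : A z -> `|z| <= M + 1 by move=> Az; apply: HM; rewrite ?ltrDl.
apply: sup_upper_bound; last by exists x => //; exists y.
split; first by exists (enorm (x - y)); exists x => //; exists y.
exists (Num.sqrt (\sum_(i < N) (2 * (M + 1)) ^+ 2)) => _ [x' Ax' [y' Ay' <-]].
rewrite /enorm ler_sqrt; last by apply: sumr_ge0 => i _; rewrite sqr_ge0.
rewrite dotvE; apply: ler_sum => i _; rewrite !mxE.
move: (le_trans (coord_le_normr x' i) (HM _ Ax')) => /ler_normlP [h1 h1'].
move: (le_trans (coord_le_normr y' i) (HM _ Ay')) => /ler_normlP [h2 h2'].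
rewrite expr2; nra.
Qed.

Lemma normr_dotv_le_sup x u : `|dotv x u| <= `|x| * \sum_i `|u 0 i|.
Proof.
rewrite dotvE mulr_sumr; apply: le_trans (ler_norm_sum _ _ _) _.
by apply: ler_sum => i _; rewrite normrM ler_wpM2r // coord_le_normr.
Qed.

Lemma cvg_dotv (v : nat -> 'rV[R]_N) l u :
  v n @[n --> \oo] --> l -> dotv (v n) u @[n --> \oo] --> dotv l u.
Proof.
move=> /cvgrPdist_le vl; apply/cvgrPdist_le => e e0.
set C := \sum_i `|u 0 i|; have C0 : 0 <= C by apply: sumr_ge0.
have eC0 : 0 < e / (C + 1) by rewrite divr_gt0 // ltr_wpDl.
near=> n; rewrite -dotvBl; apply: le_trans (normr_dotv_le_sup _ _) _.
have hn : `|l - v n| <= e / (C + 1) by near: n; exact: vl.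
apply: le_trans (ler_wpM2r C0 hn) _.
rewrite mulrAC ler_pdivrMr ?ltr_wpDl // ler_wpM2l; lra.
Unshelve. all: by end_near.
Qed.

End Euclidean.

Section Itinerary.
Local Open Scope nat_scope.

Lemma size_flatten_nseq n (s : seq nat) : size (flatten (nseq n s)) = size s * n.
Proof. by elim: n => [|n IH]; rewrite ?muln0 //= size_cat IH mulnS. Qed.

Lemma nth_flatten_nseq2 x y n i : i < 2 * n ->
  nth 0 (flatten (nseq n [:: x; y])) i = if odd i then y else x.
Proof.
elim: n i => [|n IH] [|[|i]] //= hi; rewrite ?muln0 // IH ?negbK //; lia.
Qed.

Lemma BwordS k : Bword k.+1 =
  flatten (nseq (2 ^ (2 * k + 1)) [:: 1; 2]) ++
  flatten (nseq (2 * 2 ^ (2 * k + 1)) [:: 1; 3]).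
Proof.
rewrite /Bword (_ : 2 * k.+1 - 1 = 2 * k + 1); last by lia.
by rewrite (_ : 2 * k.+1 = (2 * k + 1).+1) ?expnS //; lia.
Qed.

Lemma BprefixS k : Bprefix k.+1 = Bprefix k ++ Bword k.+1.
Proof. by rewrite /Bprefix -[k.+1]addn1 iotaD map_cat flatten_cat /= cats0 addnC. Qed.

Lemma size_Bprefix k : size (Bprefix k) + 4 = 2 * 2 ^ (2 * k + 1).
Proof.
elim: k => [//|k IH]; rewrite BprefixS size_cat BwordS size_cat !size_flatten_nseq.
rewrite (_ : 2 * k.+1 + 1 = (2 * k + 1).+2); last by lia.
by rewrite !expnS /=; lia.
Qed.

Lemma leq_size_Bprefix k : k <= size (Bprefix k).
Proof.
elim: k => // k IH; rewrite BprefixS size_cat BwordS size_cat size_flatten_nseq.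
by have := expn_gt0 2 (2 * k + 1); rewrite /=; lia.
Qed.

Lemma Bprefix_prefix m m' : m <= m' -> exists s, Bprefix m' = Bprefix m ++ s.
Proof.
elim: m' => [|m' IH]; first by rewrite leqn0 => /eqP ->; exists [::]; rewrite cats0.
rewrite leq_eqVlt ltnS => /orP [/eqP ->|/IH [s Es]]; first by exists [::]; rewrite cats0.
by exists (s ++ Bword m'.+1); rewrite BprefixS Es catA.
Qed.

Lemma Binf_Bprefix m n : n < size (Bprefix m) -> Binf n = nth 0 (Bprefix m) n.
Proof.
move=> hn; have hn' : n < size (Bprefix n.+1).
  exact: leq_trans (leq_size_Bprefix _).
have [s Es] := Bprefix_prefix (leq_maxl m n.+1).
have [t Et] := Bprefix_prefix (leq_maxr m n.+1).
have : nth 0 (Bprefix m ++ s) n = nth 0 (Bprefix n.+1 ++ t) n by rewrite -Es -Et.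
by rewrite /Binf !nth_cat hn hn' => ->.
Qed.

Lemma Binf_Bword k i : i < size (Bword k.+1) ->
  Binf (size (Bprefix k) + i) = nth 0 (Bword k.+1) i.
Proof.
move=> hi; rewrite (@Binf_Bprefix k.+1); last by rewrite BprefixS size_cat ltn_add2l.
by rewrite BprefixS nth_cat ltnNge leq_addr addKn.
Qed.

Lemma Binf_blocks k : exists P M, [/\ k <= P, P <= 2 * M,
  forall i, i < 2 * M -> Binf (P + i) = if odd i then 2 else 1 &
  forall i, i < 4 * M -> Binf (P + 2 * M + i) = if odd i then 3 else 1].
Proof.
exists (size (Bprefix k)), (2 ^ (2 * k + 1)).
have sizeP := size_Bprefix k.
have sizeB : size (Bword k.+1) = 6 * 2 ^ (2 * k + 1).
  by rewrite BwordS size_cat !size_flatten_nseq /=; lia.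
split=> [||i hi|i hi]; first exact: leq_size_Bprefix; first by lia.
  rewrite Binf_Bword ?sizeB; last by lia.
  by rewrite BwordS nth_cat size_flatten_nseq /= hi nth_flatten_nseq2.
rewrite -addnA Binf_Bword ?sizeB; last by lia.
rewrite BwordS nth_cat size_flatten_nseq /= ltnNge leq_addr addKn.
by rewrite /= nth_flatten_nseq2 // mulnA.
Qed.
End Itinerary.

Section CesaroBlocks.
Variable R : realFieldType.
Implicit Types (y : nat -> R) (a b g c L eta : R).

Lemma sum_alternating a b n :
  \sum_(i < 2 * n) (if odd i then b else a) = n%:R * (a + b).
Proof.
elim: n => [|n IH]; first by rewrite muln0 big_ord0 mul0r.
rewrite (_ : 2 * n.+1 = (2 * n).+2)%N; last by rewrite mulnS addnC addn2.
by rewrite !big_ord_recr /= IH /= oddM /= -[n.+1]addn1 natrD; ring.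
Qed.

Lemma sum_alternating_near y P n a b c :
  (forall i, (i < 2 * n)%N -> `|y (P + i)%N - (if odd i then b else a)| <= c) ->
  `|\sum_(i < 2 * n) y (P + i)%N - n%:R * (a + b)| <= (2 * n)%:R * c.
Proof.
move=> y_close; rewrite -sum_alternating -sumrB.
apply: le_trans (ler_norm_sum _ _ _) _.
rewrite mulr_natl -[X in c *+ X](card_ord (2 * n)) -sumr_const.
by apply: ler_sum => i _; apply: y_close.
Qed.

Lemma cesaro_sum_near y L eta : 0 < eta ->
  n%:R^-1 * \sum_(j < n) y j @[n --> \oo] --> L ->
  exists N0, forall n, (N0 <= n)%N -> `|\sum_(j < n) y j - n%:R * L| <= n%:R * eta.
Proof.
move=> eta0 /cvgrPdist_le /(_ eta eta0) [N0 _ mean_close].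
exists N0.+1 => -[//|n] hn; have n0 : 0 < n.+1%:R :> R by rewrite ltr0n.
rewrite -[X in `|X - _|](mulVKf (lt0r_neq0 n0)) -mulrBr normrM gtr0_norm //.
by rewrite ler_pM2l // distrC; apply: mean_close; rewrite /= ltnW.
Qed.

Lemma cesaro_block y L eta P m s c : 0 <= eta ->
  (forall n, (P <= n)%N -> `|\sum_(j < n) y j - n%:R * L| <= n%:R * eta) ->
  (P <= m)%N -> `|\sum_(i < m) y (P + i)%N - s| <= m%:R * c ->
  `|s - m%:R * L| <= m%:R * (c + 3 * eta).
Proof.
move=> eta0 hS Pm hs.
have hP := hS P (leqnn P); have hPm := hS (P + m)%N (leq_addr _ _).
rewrite big_split_ord /= natrD in hPm.
have Pm_eta : P%:R * eta <= m%:R * eta :> R by rewrite ler_wpM2r // ler_nat.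
move: hP hPm hs => /ler_normlP [hP1 hP2] /ler_normlP [hPm1 hPm2] /ler_normlP [hs1 hs2].
apply/ler_normlP; split; lra.
Qed.

Lemma cesaro_alternating_blocks y L a b g c :
  n%:R^-1 * \sum_(j < n) y j @[n --> \oo] --> L ->
  (forall k, exists P M, [/\ (k <= P)%N, (P <= 2 * M)%N,
     forall i, (i < 2 * M)%N -> `|y (P + i)%N - (if odd i then b else a)| <= c &
     forall i, (i < 4 * M)%N ->
       `|y (P + 2 * M + i)%N - (if odd i then g else a)| <= c]) ->
  b - g <= 4 * c.
Proof.
move=> cvgL blocks; apply/ler_addgt0Pr => e e0.
have eta0 : 0 < e / 12 by rewrite divr_gt0.
have [N0 hS] := cesaro_sum_near eta0 cvgL.
have [P [M [N0P PM ab ag]]] := blocks N0.+1.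
have hSP n : (P <= n)%N -> `|\sum_(j < n) y j - n%:R * L| <= n%:R * (e / 12).
  by move=> Pn; apply: hS; rewrite ltnW // (leq_trans N0P).
have hab := cesaro_block (ltW eta0) hSP PM (sum_alternating_near ab).
have ag' i : (i < 2 * (2 * M))%N ->
    `|y (P + 2 * M + i)%N - (if odd i then g else a)| <= c.
  by rewrite mulnA; apply: ag.
have PM' : (P + 2 * M <= 2 * (2 * M))%N by lia.
have hag := cesaro_block (ltW eta0)
  (fun n Pn => hSP n (leq_trans (leq_addr _ _) Pn)) PM' (sum_alternating_near ag').
have M0 : 0 < M%:R :> R by rewrite ltr0n; lia.
move: hab hag; rewrite !natrM !mulrA => /ler_normlP [h1 h2] /ler_normlP [h3 h4].
by rewrite -(ler_pM2l M0); lra.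
Qed.
End CesaroBlocks.

Section Billiard.
Variables (R : realType) (N : nat).

Lemma shiftn_Sigma (xi : int -> nat) j : in_Sigma xi -> in_Sigma (shiftn j xi).
Proof. by move=> Hs i; rewrite /shiftn addrAC; apply: Hs. Qed.

Lemma phi_in_obstacle (K : nat -> set 'rV[R]_N) phi xi (j : nat) :
  open_billiard3 K -> is_phi K phi -> in_Sigma xi ->
  K (xi j%:Z) (phi (shiftn j xi)).
Proof.
move=> [obsK _] Hphi Hs.
have [p [/(_ 0) [bdry_p0 _] ->]] := Hphi _ (shiftn_Sigma j Hs).
have [compK _] := obsK _ (Hs j%:Z).1.
have closedK := compact_closed (@norm_hausdorff _ _) compK.
by move: bdry_p0; rewrite /shiftn add0r => -[clK _]; rewrite ((closure_id _).1 closedK).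
Qed.

End Billiard.

Theorem mainTheorem7 (R : realType) (N : nat)
  (a1 a2 a3 : 'rV[R]_N) (eps : R) (K : nat -> set 'rV[R]_N)
  (phi : (int -> nat) -> 'rV[R]_N) (xi : int -> nat) :
  a1 != a2 -> a1 != a3 -> a2 != a3 ->
  0 < eps ->
  enorm (a2 - a3) > 12 * eps ->
  enorm (a1 - a2) > 2 * eps ->
  enorm (a1 - a3) > 2 * eps ->
  edist_set a1 (line_through a2 a3) > 2 * eps ->
  open_billiard3 K ->
  (K 1%N) a1 -> (K 2%N) a2 -> (K 3%N) a3 ->
  ediam (K 1%N) <= eps -> ediam (K 2%N) <= eps -> ediam (K 3%N) <= eps ->
  is_phi K phi ->
  in_Sigma xi ->
  (forall n : nat, xi n%:Z = Binf n) ->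
  ~ (exists l : 'rV[R]_N, birkhoff_avg phi xi n @[n --> \oo] --> l).
Proof.
move=> _ _ _ eps0 H23 _ _ _ Hbil K1 K2 K3 D1 D2 D3 Hphi Hs Hxi [l Hl].
set u := a2 - a3 in H23 *; set e := enorm u in H23 *.
have e0 : 0 < e by apply: lt_trans _ H23; rewrite mulr_gt0.
have uu : dotv u u = e ^+ 2 by rewrite sqr_sqrtr ?dotv_ge0.
set y := fun j : nat => dotv (phi (shiftn j xi)) u.
have y_close j c a : Binf j = c -> K c a -> ediam (K c) <= eps ->
    `|y j - dotv a u| <= eps * e.
  move=> Ej Ka Dc; rewrite /y -dotvBl normr_dotv_le ?uu // dotv_sqr_le ?(ltW eps0) //.
  rewrite -Ej -Hxi in Dc Ka; apply: le_trans Dc; apply: enorm_le_ediam => //.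
    by case: (Hbil.1 _ (Hs j%:Z).1).
  exact: (phi_in_obstacle j Hbil Hphi Hs).
have cvg_y : n%:R^-1 * \sum_(j < n) y j @[n --> \oo] --> dotv l u.
  by under eq_fun do rewrite -dotv_suml -dotvZl; apply: cvg_dotv.
have : dotv a2 u - dotv a3 u <= 4 * (eps * e).
  apply: (cesaro_alternating_blocks (a := dotv a1 u) cvg_y) => k.
  have [P [M [kP PM B12 B13]]] := Binf_blocks k.
  exists P, M; split=> // i hi.
    by case: odd (B12 i hi) => Ei; [exact: y_close Ei K2 D2|exact: y_close Ei K1 D1].
  by case: odd (B13 i hi) => Ei; [exact: y_close Ei K3 D3|exact: y_close Ei K1 D1].
rewrite -dotvBl -/u uu expr2 => h.
have : e <= 4 * eps by rewrite -(ler_pM2r e0); lra.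
lra.
Qed.
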